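(* For a positive integer $d$ let $p(d)=\frac{3}{16}(d-1)d^2\prod_{q\mid d}\bigl(1-\frac{1}{q^2}\bigr)$ (product over prime divisors $q$ of $d$), and for $n\ge1$ let $a_n=\sum_{d\mid n}\sigma_1\bigl(\frac{n}{d}\bigr)p(d)$. Then for every $n\geq1$, \[ a_n=\frac{3}{16}\bigl[\sigma_3(n)-n\sigma_1(n)\bigr]. \]
   Context: $\sigma_\ell(m)=\sum_{d\mid m}d^\ell$ for positive integers $m$. (For odd $n$, $p(n)$ is the number of primitive type A square-tiled surfaces with $n$ squares in $\mathcal{H}(2)$ and $a_n$ the number of all type A ones; for even $n$ the quantities are defined by these formulas.) *)

From mathcomp Require Import all_boot all_order all_algebra.
Set Implicit Arguments. Unset Strict Implicit. Unset Printing Implicit Defensive.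
Import Order.TTheory GRing.Theory Num.Theory.
Local Open Scope ring_scope.

Definition sigma (l m : nat) : rat := \sum_(d <- divisors m) (d ^ l)%:R.

Definition pfun (d : nat) : rat :=
  (3%:R / 16%:R) * ((d%:R - 1) * (d%:R) ^+ 2 *
    \prod_(q <- primes d) (1 - (q%:R ^+ 2)^-1)).

Definition a_seq (n : nat) : rat :=
  \sum_(d <- divisors n) sigma 1 (n %/ d) * pfun d.

(* With Jordan's totient J_2(d) = d^2 prod_(q | d) (1 - q^-2) one has
   p(d) = 3/16 (d - 1) J_2(d).  J_2 is multiplicative, hence so is its divisor
   sum, and on prime powers that sum telescopes to p^(2k); thus
   sum_(d | m) J_2(d) = m^2.  Expanding sigma_1(n/d) as a divisor sum and
   exchanging the two sums gives
     sum_(d | n) sigma_1(n/d) J_2(d)   = sum_(e | n) e (n/e)^2 = n sigma_1(n),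
     sum_(d | n) sigma_1(n/d) d J_2(d) = sum_(e | n) (n/e)^3   = sigma_3(n),
   using sigma_1(n/d) d = sum_(e | n/d) n/e for the second one. *)

From mathcomp Require Import all_boot all_order all_algebra.
From mathcomp Require Import ring.
Import Order.TTheory GRing.Theory Num.Theory.

Set Implicit Arguments.
Unset Strict Implicit.
Unset Printing Implicit Defensive.

Lemma muln_gcd_coprime m n d : coprime m n -> d %| m * n ->
  gcdn d m * gcdn d n = d.
Proof.
move=> cmn dmn; apply/eqP; rewrite eqn_dvd; apply/andP; split.
  have cop : coprime (gcdn d m) (gcdn d n).
    exact: coprime_dvdl (dvdn_gcdr _ _) (coprime_dvdr (dvdn_gcdr _ _) cmn).
  by rewrite Gauss_dvd // !dvdn_gcdl.
have d_gm_n : d %| gcdn d m * n by rewrite muln_gcdl dvdn_gcd dvdn_mulr.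
by rewrite muln_gcdr dvdn_gcd d_gm_n dvdn_mull.
Qed.

Lemma divisorsM m n : 0 < m -> 0 < n -> coprime m n ->
  perm_eq (divisors (m * n)) [seq a * b | a <- divisors m, b <- divisors n].
Proof.
move=> m_gt0 n_gt0 cmn.
have gcd_factor a b : a %| m -> b %| n -> gcdn (a * b) m = a /\ gcdn (a * b) n = b.
  move=> am bn; have cmb : coprime m b by exact: coprime_dvdr bn cmn.
  have cna : coprime n a by rewrite coprime_sym (coprime_dvdl am cmn).
  by rewrite !(gcdnC (a * b)) Gauss_gcdl // Gauss_gcdr //; split; apply/gcdn_idPr.
apply: uniq_perm; first exact: divisors_uniq.
  apply: allpairs_uniq; try exact: divisors_uniq.
  move=> [a b] [a' b'] /allpairsP[[x y] /= [xm yn [-> ->]]].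
  move=> /allpairsP[[x' y'] /= [xm' yn' [-> ->]]] /= Exy.
  rewrite -!dvdn_divisors // in xm yn xm' yn'.
  have [gx gy] := gcd_factor _ _ xm yn; have [gx' gy'] := gcd_factor _ _ xm' yn'.
  by congr pair; [rewrite -gx -gx' Exy | rewrite -gy -gy' Exy].
move=> d; rewrite -dvdn_divisors ?muln_gt0 ?m_gt0 //; apply/idP/allpairsP.
  move=> dmn; exists (gcdn d m, gcdn d n).
  by rewrite -!dvdn_divisors // !dvdn_gcdr (muln_gcd_coprime cmn dmn).
by move=> [[x y] /= [xm yn ->]]; rewrite -!dvdn_divisors // in xm yn *; apply: dvdn_mul.
Qed.

Lemma divisors_pfactor p k : prime p ->
  perm_eq (divisors (p ^ k)) [seq p ^ i | i <- iota 0 k.+1].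
Proof.
move=> p_pr; apply: uniq_perm; first exact: divisors_uniq.
  by rewrite map_inj_uniq ?iota_uniq //; apply: expnI (prime_gt1 p_pr).
move=> d; rewrite -dvdn_divisors ?expn_gt0 ?prime_gt0 //.
apply/(dvdn_pfactor _ _ p_pr)/mapP => [[i ik ->]|[i]].
  by exists i; rewrite // mem_iota.
by rewrite mem_iota => /andP[_ ik] ->; exists i.
Qed.

Lemma divn_dvd_gt0 n d : 0 < n -> d %| n -> 0 < n %/ d.
Proof. by move=> n_gt0 dn; rewrite divn_gt0 ?(dvdn_gt0 n_gt0 dn) ?(dvdn_leq n_gt0 dn). Qed.

Lemma divnK_dvd_quotient n d e : d %| n -> e %| n %/ d -> n %/ d %/ e * d = n %/ e.
Proof.
move=> dn; rewrite dvdn_divRL // => edn.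
by rewrite divnAC divnK // dvdn_divRL ?(dvdn_trans (dvdn_mulr d (dvdnn e))) // mulnC.
Qed.

Lemma divn_divn_dvd n d : 0 < n -> d %| n -> n %/ (n %/ d) = d.
Proof. by move=> n_gt0 dn; rewrite divnA // mulKn. Qed.

Lemma divisors_quotient n : 0 < n ->
  perm_eq [seq n %/ d | d <- divisors n] (divisors n).
Proof.
move=> n_gt0; apply: uniq_perm => [||d]; rewrite ?divisors_uniq //.
  rewrite map_inj_in_uniq ?divisors_uniq // => d e.
  rewrite -!dvdn_divisors // => dn en de.
  by rewrite -(divn_divn_dvd n_gt0 dn) de divn_divn_dvd.
apply/mapP/idP => [[e + ->]|]; first by rewrite -!dvdn_divisors // => /dvdn_div.
rewrite -dvdn_divisors // => dn.
by exists (n %/ d); rewrite ?divn_divn_dvd // -dvdn_divisors ?dvdn_div.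
Qed.

Local Open Scope ring_scope.

Lemma sum_divisorsE (R : nmodType) n N (F : nat -> R) : (0 < n)%N -> (n < N)%N ->
  \sum_(d <- divisors n) F d = \sum_(0 <= d < N | (d %| n)%N) F d.
Proof.
move=> n_gt0 n_lt_N; rewrite -[RHS]big_filter; apply: perm_big.
apply: uniq_perm => [||d]; rewrite ?divisors_uniq ?filter_uniq ?iota_uniq //.
rewrite mem_filter mem_iota -dvdn_divisors //; case dn: (d %| n)%N => //=.
by rewrite add0n subn0 (leq_ltn_trans (dvdn_leq n_gt0 dn)).
Qed.

Lemma sum_divisors_quotient (R : nmodType) n (F : nat -> R) : (0 < n)%N ->
  \sum_(d <- divisors n) F d = \sum_(d <- divisors n) F (n %/ d)%N.
Proof.
by move=> n_gt0; rewrite -(big_map (divn n) xpredT) (perm_big _ (divisors_quotient n_gt0)).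
Qed.

Lemma sum_divisors_pairs (R : nmodType) n (G : nat -> nat -> R) : (0 < n)%N ->
  \sum_(d <- divisors n) \sum_(e <- divisors (n %/ d)) G d e =
  \sum_(0 <= d < n.+1) \sum_(0 <= e < n.+1 | (d * e %| n)%N) G d e.
Proof.
move=> n_gt0; rewrite (sum_divisorsE _ n_gt0 (ltnSn n)) big_mkcond.
apply: eq_bigr => d _; case: ifPn => [dn | ndn]; last first.
  by apply/esym/big1 => e /(dvdn_trans (dvdn_mulr e (dvdnn d))); rewrite (negbTE ndn).
rewrite (sum_divisorsE _ (divn_dvd_gt0 n_gt0 dn) (leq_ltn_trans (leq_div n d) (ltnSn n))).
by apply: eq_bigl => e; rewrite dvdn_divRL // mulnC.
Qed.

Lemma sum_divisors_exchange (R : nmodType) n (G : nat -> nat -> R) : (0 < n)%N ->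
  \sum_(d <- divisors n) \sum_(e <- divisors (n %/ d)) G d e =
  \sum_(e <- divisors n) \sum_(d <- divisors (n %/ e)) G d e.
Proof.
move=> n_gt0; rewrite !sum_divisors_pairs // (exchange_big_dep xpredT) //=.
by apply: eq_bigr => e _; apply: eq_bigl => d; rewrite mulnC.
Qed.

Definition arith_multiplicative (R : pzSemiRingType) (F : nat -> R) : Prop :=
  forall a b, (0 < a)%N -> (0 < b)%N -> coprime a b -> F (a * b) = F a * F b.

Lemma sum_divisors_multiplicative (R : comPzSemiRingType) (F : nat -> R) :
  arith_multiplicative F ->
  arith_multiplicative (fun n => \sum_(d <- divisors n) F d).
Proof.
move=> F_mul m n m_gt0 n_gt0 cmn /=.
rewrite (perm_big _ (divisorsM m_gt0 n_gt0 cmn)) big_allpairs_dep big_distrlr /=.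
rewrite big_seq [RHS]big_seq; apply: eq_bigr => a; rewrite -dvdn_divisors // => am.
rewrite big_seq [RHS]big_seq; apply: eq_bigr => b; rewrite -dvdn_divisors // => bn.
apply: F_mul; [exact: dvdn_gt0 am | exact: dvdn_gt0 bn |].
exact: coprime_dvdr bn (coprime_dvdl am cmn).
Qed.

Lemma eq_arith_multiplicative (R : pzSemiRingType) (F G : nat -> R) :
  arith_multiplicative F -> arith_multiplicative G ->
  (forall p k, prime p -> F (p ^ k)%N = G (p ^ k)%N) ->
  forall m, (0 < m)%N -> F m = G m.
Proof.
move=> F_mul G_mul FG_pfactor m; elim/ltn_ind: m => m IH m_gt0.
have [m_le1 | m_gt1] := leqP m 1.
  have -> : m = (2 ^ 0)%N by apply/eqP; rewrite eqn_leq m_le1.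
  exact: FG_pfactor.
have p_pr := pdiv_prime m_gt1; set p := pdiv m in p_pr.
have [r cpr m_eq] := pfactor_coprime p_pr m_gt0.
have r_gt0 : (0 < r)%N by move: m_gt0; rewrite m_eq muln_gt0 => /andP[].
have pk_gt0 : (0 < p ^ logn p m)%N by rewrite expn_gt0 prime_gt0.
have r_lt_m : (r < m)%N.
  rewrite m_eq ltn_Pmulr // -(expn0 p) ltn_exp2l ?prime_gt1 //.
  by rewrite logn_gt0 mem_primes p_pr m_gt0 pdiv_dvd.
have crp : coprime r (p ^ logn p m)%N by rewrite coprime_sym coprimeXl.
by rewrite m_eq F_mul ?G_mul // IH ?FG_pfactor.
Qed.

Section Jordan.

Variable R : numFieldType.

Definition jordan2 (d : nat) : R :=
  d%:R ^+ 2 * \prod_(q <- primes d) (1 - (q%:R ^+ 2)^-1).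

Lemma jordan2_multiplicative : arith_multiplicative jordan2.
Proof.
move=> a b a_gt0 b_gt0 cab.
have primesM_coprime : perm_eq (primes (a * b)) (primes a ++ primes b).
  apply: uniq_perm => [||q]; first exact: primes_uniq.
    by rewrite cat_uniq !primes_uniq -coprime_has_primes ?cab.
  by rewrite mem_cat primesM.
rewrite /jordan2 (perm_big _ primesM_coprime) big_cat /= natrM exprMn.
exact: mulrACA.
Qed.

Lemma jordan2_pfactor p k : prime p ->
  jordan2 (p ^ k.+1) = (p ^ k.+1)%:R ^+ 2 - (p ^ k)%:R ^+ 2.
Proof.
move=> p_pr; have p_neq0 : p%:R != 0 :> R by rewrite pnatr_eq0 -lt0n prime_gt0.
rewrite /jordan2 primesX // primes_prime // big_seq1 expnS natrM.
by field.
Qed.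

Lemma sum_jordan2_pfactor p k : prime p ->
  \sum_(d <- divisors (p ^ k)) jordan2 d = (p ^ k)%:R ^+ 2.
Proof.
move=> p_pr; rewrite (perm_big _ (divisors_pfactor k p_pr)) big_map.
have -> : iota 0 k.+1 = index_iota 0 k.+1 by rewrite /index_iota subn0.
elim: k => [|k IH].
  by rewrite big_nat1 /jordan2 big_nil mulr1.
by rewrite big_nat_recr //= IH jordan2_pfactor // addrC subrK.
Qed.

Lemma sum_jordan2 m : (0 < m)%N -> \sum_(d <- divisors m) jordan2 d = m%:R ^+ 2.
Proof.
apply: (eq_arith_multiplicative (F := fun n => \sum_(d <- divisors n) jordan2 d)
  (G := fun n => n%:R ^+ 2)).
- exact/sum_divisors_multiplicative/jordan2_multiplicative.
- by move=> a b _ _ _; rewrite natrM exprMn.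
- exact: sum_jordan2_pfactor.
Qed.

Lemma sum_divisors_conv_jordan2 n (F : nat -> R) : (0 < n)%N ->
  \sum_(d <- divisors n) (\sum_(e <- divisors (n %/ d)) F e) * jordan2 d =
  \sum_(e <- divisors n) F e * (n %/ e)%:R ^+ 2.
Proof.
move=> n_gt0; under eq_bigr do rewrite mulr_suml.
rewrite sum_divisors_exchange // big_seq [RHS]big_seq; apply: eq_bigr => e.
by rewrite -dvdn_divisors // => en; rewrite -mulr_sumr sum_jordan2 ?divn_dvd_gt0.
Qed.

End Jordan.

Lemma pfunE d : pfun d = 3%:R / 16%:R * ((d%:R - 1) * jordan2 rat d).
Proof. by rewrite /pfun /jordan2 !mulrA. Qed.

Lemma sigma1E m : sigma 1 m = \sum_(d <- divisors m) d%:R.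
Proof. by apply: eq_bigr => d _; rewrite expn1. Qed.

Lemma sum_sigma1_jordan2 n : (0 < n)%N ->
  \sum_(d <- divisors n) sigma 1 (n %/ d) * jordan2 rat d = n%:R * sigma 1 n.
Proof.
move=> n_gt0; under eq_bigr do rewrite sigma1E.
rewrite sum_divisors_conv_jordan2 // sigma1E [in RHS](sum_divisors_quotient _ n_gt0).
rewrite mulr_sumr big_seq [RHS]big_seq; apply: eq_bigr => e.
by rewrite -dvdn_divisors // => en; rewrite expr2 mulrA -!natrM (mulnC e) divnK.
Qed.

Lemma sum_sigma1_mul_jordan2 n : (0 < n)%N ->
  \sum_(d <- divisors n) sigma 1 (n %/ d) * (d%:R * jordan2 rat d) = sigma 3 n.
Proof.
move=> n_gt0.
have sigma1_mul d : (d %| n)%N ->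
    sigma 1 (n %/ d) * d%:R = \sum_(e <- divisors (n %/ d)) (n %/ e)%:R.
  move=> dn; have nd_gt0 := divn_dvd_gt0 n_gt0 dn.
  rewrite sigma1E (sum_divisors_quotient _ nd_gt0) mulr_suml.
  rewrite big_seq [RHS]big_seq; apply: eq_bigr => e; rewrite -dvdn_divisors // => en.
  by rewrite -natrM divnK_dvd_quotient.
rewrite big_seq; under eq_bigr => d do
  rewrite -dvdn_divisors // mulrA => /sigma1_mul ->.
rewrite -big_seq sum_divisors_conv_jordan2 // /sigma [in RHS](sum_divisors_quotient _ n_gt0).
by apply: eq_bigr => e _; rewrite -exprS natrX.
Qed.

Theorem mainTheorem6 (n : nat) : (1 <= n)%N ->
  a_seq n = (3%:R / 16%:R) * (sigma 3 n - n%:R * sigma 1 n).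
Proof.
move=> n_gt0.
rewrite /a_seq -sum_sigma1_mul_jordan2 // -sum_sigma1_jordan2 // mulrBr !mulr_sumr -sumrB.
by apply: eq_bigr => d _; rewrite pfunE; ring.
Qed.
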